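(* Let $f$ be the signature type of an abelian monodromy datum $(G,r,\underline{a})$. If there exists $\tau\in\mathcal{T}_G$ with $f(\tau^* )=0$ and $g(\tau)\ge 2$, then there exists $\tau'\in\mathcal{T}_G$ with $f(\tau'^* )=1$ and $g(\tau')\ge 2$.
   Context: A monodromy datum $(G,r,\underline{a})$: $G$ finite abelian, $r\ge 3$, $\underline{a}=(a(1),\dots,a(r))\in G^r$ with each $a(i)\ne 0$, the $a(i)$ generating $G$, and $\sum a(i)=0$. $\mathcal{T}_G=\mathrm{Hom}(G,\mathbb{C}^\times)$, $\tau^*(g)=\tau(g^{-1})$. The signature type is $f(\tau)=\dim H^0(C,\Omega^1_C)_\tau$ for a complex smooth $G$-cover $C\to\mathbb{P}^1$ with this monodromy datum, and $g(\tau)=f(\tau)+f(\tau^* )$. For $G=\mathbb{Z}/m\mathbb{Z}$ and $\tau(1)=e^{2\pi i A/m}$ one has $f(\tau^* )=-1+\sum_{k=1}^r\langle A a(k)/m\rangle$, $\langle x\rangle$ the fractional part; for general $G$ and $H=\ker\tau$, $f(\tau)$ agrees with the signature of $\tau$ viewed as a character of the cyclic quotient $G/H$ for the quotient cover $C/H\to\mathbb{P}^1$. *)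

From HB Require Import structures.
From mathcomp Require Import all_boot all_order all_algebra all_fingroup all_solvable all_field all_character.
Set Implicit Arguments. Unset Strict Implicit. Unset Printing Implicit Defensive.
Import Order.TTheory GRing.Theory Num.Theory.
Local Open Scope ring_scope.

(* zeta N = exp(2 pi i / N) in algC: N.-root (-1) is the N-th root of -1 with
   minimal nonnegative argument, i.e. exp(pi i / N). *)
Definition zeta (N : nat) : algC := (N.-root (-1)) ^+ 2.

(* For an N-th root of unity z = exp(2 pi i k / N) with 0 <= k < N,
   angle N z = k / N, the fractional part <arg(z)/(2 pi)>. *)
Definition angle (N : nat) (z : algC) : rat :=
  (find (fun k => z == zeta N ^+ k) (iota 0 N))%:R / N%:R.

(* Signature type of the monodromy datum (G, r, a), via the Chevalley-Weil
   formula: for a nontrivial character sigma,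
     f(sigma) = -1 + sum_k < arg(sigma^*(a(k))) / 2pi >,
   i.e. f(tau^* ) = -1 + sum_k <A a(k)/m> when tau(a(k)) = exp(2 pi i A a(k)/m);
   for the trivial character f = 0 (genus of P^1). *)
Definition sigf (gT : finGroupType) (G : {group gT}) (r : nat)
  (a : 'I_r -> gT) (sigma : 'CF(G)) : rat :=
  if sigma == 1 then 0
  else -1 + \sum_(i < r) angle #|G| ((sigma^*)%CF (a i)).

Definition gsig (gT : finGroupType) (G : {group gT}) (r : nat)
  (a : 'I_r -> gT) (tau : 'CF(G)) : rat :=
  sigf a tau + sigf a (tau^*)%CF.

(* Write tau (a i) = zeta^(d i) with 0 <= d i < N = #|G|. The Chevalley-Weil
   formula gives f(tau^* ) = (sum_i d i) / N - 1 and g(tau) = #{i | d i <> 0} - 2,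
   so the hypothesis says sum_i d i = N with at least four nonzero d i. The sums
   V n = sum_i (n d i mod N) are multiples of N, grow by at most N at each step,
   equal N at n = 1 and are at least 2N at n = N - 1. At the step where V goes
   from N to 2N every term grows by exactly d i, so no nonzero term wraps to 0:
   tau^n then has f(tau^n^* ) = 1 and the same support as tau, hence the same g. *)

From HB Require Import structures.
From mathcomp Require Import all_boot all_order all_algebra all_fingroup all_solvable all_field all_character.
From mathcomp Require Import zify ring.
Set Implicit Arguments. Unset Strict Implicit. Unset Printing Implicit Defensive.
Import Order.TTheory GRing.Theory Num.Theory.

Lemma subn_mod_add (N x : nat) : x < N -> (N - x) %% N + x = (0 < x) * N.
Proof.
move=> xN; case: (posnP x) => [->|x_gt0]; first by rewrite subn0 modnn.
have xleN := ltnW xN.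
rewrite modn_small ?mul1n ?subnK //.
by rewrite -subn_gt0 subKn.
Qed.

Lemma sum_subn_mod (I : finType) (N : nat) (x : I -> nat) :
  (forall i, x i < N) ->
  \sum_i (N - x i) %% N + \sum_i x i = #|[pred i | 0 < x i]| * N.
Proof.
move=> xN; rewrite -big_split -sum_nat_const [RHS]big_mkcond /=.
apply: eq_bigr => i _; rewrite subn_mod_add // inE.
by case: (0 < x i); rewrite ?mul1n ?mul0n.
Qed.

Lemma mul_predn_mod (N x : nat) : x < N -> N.-1 * x %% N = (N - x) %% N.
Proof.
move=> xN; case: (posnP x) => [->|x_gt0]; first by rewrite muln0 mod0n subn0 modnn.
have -> : N.-1 * x = x.-1 * N + (N - x) by nia.
by rewrite modnMDl.
Qed.

Lemma mulSn_mod_le (N n x : nat) : n.+1 * x %% N <= n * x %% N + x.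
Proof. by rewrite mulSnr -modnDml leq_mod. Qed.

Lemma exists_consecutive_multiples (V : nat -> nat) (N c k : nat) :
  (forall n, N %| V n) -> (forall n, V n.+1 <= V n + N) ->
  V 0 < c.+1 * N -> c.+1 * N <= V k ->
  exists m, V m = c * N /\ V m.+1 = c.+1 * N.
Proof.
move=> dvdNV stepV V0 Vk; have exP : exists n, c.+1 * N <= V n by exists k.
case: (ex_minnP exP) => -[|m]; first by rewrite leqNgt V0.
move=> Vm1 min_m; have Vm : V m < c.+1 * N.
  by rewrite ltnNge; apply/negP => /min_m; rewrite ltnn.
have [q Vq] := dvdnP (dvdNV m); rewrite Vq in Vm.
have N_gt0 : 0 < N by move: (leq_ltn_trans (leq0n _) V0); rewrite muln_gt0 => /andP[].
have Vm1_le : V m.+1 <= q.+1 * N by rewrite mulSnr -Vq stepV.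
have q_eq : q = c.
  apply/eqP; rewrite eqn_leq -ltnS -(ltn_pmul2r N_gt0) Vm /=.
  by rewrite -ltnS -(leq_pmul2r N_gt0) (leq_trans Vm1 Vm1_le).
by exists m; rewrite Vq q_eq; split => //; apply/eqP; rewrite eqn_leq Vm1 -q_eq Vm1_le.
Qed.

(* Take the step of V n := \sum_i (n * d i %% N) from N to 2N: the termwise bound
   [mulSn_mod_le] is then tight, so n * d i %% N grows by exactly d i. *)
Lemma exists_mulmod_sum_double (I : finType) (N : nat) (d : I -> nat) :
  (forall i, d i < N) -> \sum_i d i = N -> 3 <= #|[pred i | 0 < d i]| ->
  exists n, \sum_i (n * d i %% N) = 2 * N /\
            forall i, (0 < n * d i %% N) = (0 < d i).
Proof.
move=> d_lt sum_d supp3; pose V n := \sum_i (n * d i %% N).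
have /card_gt0P[i0 _] : 0 < #|[pred i | 0 < d i]| by apply: leq_trans supp3.
have N_gt0 : 0 < N := leq_ltn_trans (leq0n _) (d_lt i0).
have dvdNV n : N %| V n.
  by rewrite /dvdn /V modn_summ -big_distrr /= sum_d modnMl.
have stepV n : V n.+1 <= V n + N.
  by rewrite /V -[X in _ + X]sum_d -big_split leq_sum // => i _; apply: mulSn_mod_le.
have V0 : V 0 < 2 * N by rewrite [V 0]big1 ?muln_gt0 // => i _; rewrite mul0n mod0n.
have VpredN : V N.-1 + N = #|[pred i | 0 < d i]| * N.
  rewrite -sum_subn_mod // sum_d; congr (_ + _).
  by apply: eq_bigr => i _; rewrite mul_predn_mod.
have VpredN_ge : 2 * N <= V N.-1.
  by rewrite -(leq_add2r N) -mulSnr VpredN leq_mul2r supp3 orbT.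
have [m [Vm Vm1]] := exists_consecutive_multiples dvdNV stepV V0 VpredN_ge.
have step_eq i : m.+1 * d i %% N = m * d i %% N + d i.
  have := leqif_sum (P := xpredT) (fun i _ => leqif_eq (mulSn_mod_le N m (d i))).
  rewrite big_split /= sum_d -/(V m) -/(V m.+1) Vm Vm1 mulSnr mul1n.
  by move=> [_]; rewrite eqxx => /esym/forallP/(_ i)/eqP.
exists m.+1; split => // i; rewrite step_eq.
by case: (d i) => [|x]; rewrite ?muln0 ?mod0n ?addnS.
Qed.

Local Open Scope ring_scope.

Lemma sum_expr_unity_root_eq0 (R : idomainType) (x : R) (l : nat) :
  x != 1 -> x ^+ l = 1 -> \sum_(i < l) x ^+ i = 0.
Proof.
move=> x_neq1 xl; have := subrX1 x l; rewrite xl subrr => /esym/eqP.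
by rewrite mulf_eq0 subr_eq0 (negbTE x_neq1) => /eqP.
Qed.

Lemma sum_geom_prim_root_orbit (R : idomainType) (eps z : R) (l : nat) :
  l.-primitive_root eps ->
  \sum_(i < l) \sum_(k < l) (z * eps ^+ i) ^+ k = l%:R.
Proof.
move=> eps_prim; have l_gt0 := prim_order_gt0 eps_prim.
rewrite exchange_big /= (bigD1 (Ordinal l_gt0)) //= [X in _ + X]big1 => [|k k_neq0].
  by rewrite addr0 (eq_bigr (fun _ => 1)) ?sumr_const ?card_ord // => i _; rewrite expr0.
under eq_bigr do rewrite exprMn -exprM mulnC exprM.
rewrite -mulr_sumr sum_expr_unity_root_eq0 ?mulr0 //.
  by rewrite -(prim_order_dvd eps_prim) /dvdn modn_small.
by rewrite exprAC (prim_expr_order eps_prim) expr1n.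
Qed.

(* If every l-th root z of w had |1 - z| >= |1 - w|, then 1 - w = (1 - z) s(z),
   with s(z) the geometric sum of z, would bound all |s(z)| by 1; these sums add
   up to l, so all equal 1 and every l-th root of w would be w itself. *)
Lemma exists_root_nearer1 (w : algC) (l : nat) : (1 < l)%N -> w != 1 -> w != 0 ->
  exists z, z ^+ l = w /\ `|1 - z| < `|1 - w|.
Proof.
move=> l_gt1 w_neq1 w_neq0; have l_gt0 := ltnW l_gt1.
have [eps eps_prim] := C_prim_root_exists l_gt0.
pose z0 := l.-root w; pose zi (i : 'I_l) := z0 * eps ^+ i.
pose s (z : algC) := \sum_(k < l) z ^+ k.
have zi_root i : zi i ^+ l = w.
  by rewrite exprMn exprAC (prim_expr_order eps_prim) expr1n mulr1 rootCK.
have factor z : z ^+ l = w -> 1 - w = (1 - z) * s z.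
  by move=> <-; rewrite -opprB subrX1 -mulNr opprB.
have [/existsP[i near_i]|/existsPn far] := boolP [exists i, `|1 - zi i| < `|1 - w|].
  by exists (zi i).
have s_le1 i : `|s (zi i)| <= 1.
  have w_far : `|1 - w| <= `|1 - zi i| by rewrite real_leNgt ?normr_real ?far.
  have w_pos : 0 < `|1 - w| by rewrite normr_gt0 subr_eq0 eq_sym.
  rewrite -(ler_pM2l (lt_le_trans w_pos w_far)) mulr1 -normrM -factor //.
have s_eq1 i : s (zi i) = 1.
  apply: (@normC_sum_upper _ _ xpredT (fun j => s (zi j)) (fun _ => 1)) => //.
  by rewrite sum_geom_prim_root_orbit // sumr_const card_ord.
have zi_eq i : zi i = w.
  by have := factor _ (zi_root i); rewrite s_eq1 mulr1 => /addrI/oppr_inj.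
have z0_neq0 : z0 != 0 by rewrite rootC_eq0.
have := zi_eq (Ordinal l_gt1); rewrite -(zi_eq (Ordinal l_gt0)) /zi expr0 expr1.
move=> /(mulfI z0_neq0)/eqP; rewrite -(expr1 eps) -(prim_order_dvd eps_prim).
by rewrite dvdn1 gtn_eqF.
Qed.

Lemma rootC_Re_max_real (C : numClosedFieldType) (n : nat) (x y : C) :
  (0 < n)%N -> x \is Num.real -> y ^+ n = x -> 'Re y <= 'Re (n.-root x).
Proof.
move=> n_gt0 x_real yn; have [Im_ge0|Im_lt0] := boolP (0 <= 'Im y).
  exact: rootC_Re_max.
rewrite -Re_conj rootC_Re_max // ?Im_conj ?oppr_ge0.
  by rewrite -rmorphXn yn; apply/CrealP.
by rewrite ltW // real_ltNge ?Creal_Im ?rpred0.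
Qed.

Lemma sqr_norm_1subr (C : numClosedFieldType) (z : C) :
  `|z| = 1 -> `|1 - z| ^+ 2 = 2 - 2 * 'Re z.
Proof.
move=> z_norm1; have zz : z * z^* = 1 by rewrite -normCK z_norm1 expr1n.
rewrite normCK rmorphB rmorph1 ReE [2 * _]mulrC divfK ?pnatr_eq0 //.
by rewrite mulrBl !mulrBr mul1r mulr1 zz; ring.
Qed.

Lemma norm_unity_root (C : numClosedFieldType) (z : C) (n : nat) :
  (0 < n)%N -> `|z ^+ n| = 1 -> `|z| = 1.
Proof.
by move=> n_gt0 zn; apply/eqP; rewrite -(pexpr_eq1 n_gt0) ?normr_ge0 // -normrX zn.
Qed.

(* w := N.-root (-1) has maximal real part among the solutions of z^N = -1. If
   its order d were a proper divisor of 2N, a (2N/d)-th root of w nearer to 1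
   would be a solution with a larger real part. *)
Lemma zeta_prim_root (N : nat) : (0 < N)%N -> N.-primitive_root (zeta N).
Proof.
move=> N_gt0; set w := N.-root (-1 : algC).
have N1_neq1 : (-1 : algC) != 1 by rewrite lt_eqF // (lt_trans (ltrN10 _) ltr01).
have wN : w ^+ N = -1 by rewrite rootCK.
have w2N : w ^+ (N * 2) = 1 by rewrite exprM wN sqrrN expr1n.
have N2_gt0 : (0 < N * 2)%N by rewrite muln_gt0 N_gt0.
have [d w_prim /dvdnP[q def2N]] := prim_order_exists N2_gt0 w2N.
case: q def2N => [|[|q]] def2N; first by move: N2_gt0; rewrite def2N.
  have := exp_prim_root w_prim 2.
  by rewrite mul1n in def2N; rewrite -def2N gcdnMl mulnK.
have w_neq1 : w != 1 by rewrite rootC_eq1.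
have w_neq0 : w != 0 by rewrite rootC_eq0 // oppr_eq0 oner_eq0.
have [z [zq z_near]] := exists_root_nearer1 (l := q.+2) isT w_neq1 w_neq0.
have zN : z ^+ N = -1.
  have /eqP : (z ^+ N) ^+ 2 = 1 by rewrite -exprM def2N exprM zq (prim_expr_order w_prim).
  rewrite sqrf_eq1 => /orP[/eqP zN1|/eqP //].
  by move: N1_neq1; rewrite -wN -zq exprAC zN1 expr1n eqxx.
have norm1 (v : algC) : v ^+ N = -1 -> `|v| = 1.
  by move=> vN; apply: (norm_unity_root N_gt0); rewrite vN normrN normr1.
have Re_le : 'Re z <= 'Re w := rootC_Re_max_real N_gt0 (rpredN1 _) zN.
suff Re_lt : 'Re w < 'Re z by move: Re_le; rewrite real_leNgt ?Creal_Re ?Re_lt.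
move: z_near; rewrite -(ltr_pXn2r (n := 2)) ?nnegrE //.
by rewrite !sqr_norm_1subr ?norm1 // ltrD2l ltrN2 ltr_pM2l.
Qed.

Lemma angle_zeta_expr (N k : nat) :
  (0 < N)%N -> angle N (zeta N ^+ k) = (k %% N)%:R / N%:R.
Proof.
move=> N_gt0; rewrite /angle; congr (_%:R / _).
have zeta_prim := zeta_prim_root N_gt0.
rewrite (@eq_in_find _ _ (pred1 (k %% N)%N)) => [|j]; last first.
  rewrite mem_iota add0n /= => jN.
  by rewrite (eq_prim_root_expr zeta_prim) (modn_small jN) eq_sym.
have kN : (k %% N < N)%N by rewrite ltn_pmod.
have := @index_uniq _ 0 (k %% N)%N (iota 0 N).
by rewrite size_iota nth_iota // add0n; apply; rewrite ?iota_uniq.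
Qed.

Lemma conjC_zeta_expr (N k : nat) : (0 < N)%N -> (k <= N)%N ->
  (zeta N ^+ k)^* = zeta N ^+ (N - k).
Proof.
move=> N_gt0 kN; have zeta_prim := zeta_prim_root N_gt0.
have v_norm1 : `|zeta N ^+ k| = 1.
  apply: (norm_unity_root N_gt0).
  by rewrite exprAC (prim_expr_order zeta_prim) expr1n normr1.
have v_neq0 : zeta N ^+ k != 0 by rewrite -normr_eq0 v_norm1 oner_eq0.
apply: (mulfI v_neq0); rewrite -normCK v_norm1 expr1n -exprD subnKC //.
by rewrite (prim_expr_order zeta_prim).
Qed.

Lemma zeta_expr_neq1 (N k : nat) : (k < N)%N -> (zeta N ^+ k != 1) = (0 < k)%N.
Proof.
move=> kN; have N_gt0 := leq_ltn_trans (leq0n k) kN.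
by rewrite -(prim_order_dvd (zeta_prim_root N_gt0)) /dvdn modn_small // lt0n.
Qed.

Lemma lin_char_zeta_expr (gT : finGroupType) (G : {group gT}) (xi : 'CF(G)) (x : gT) :
  xi \is a linear_char -> x \in G ->
  {k : nat | xi x = zeta #|G| ^+ k & (k < #|G|)%N}.
Proof.
move=> lin_xi Gx.
have xiG : xi x ^+ #|G| = 1 by rewrite -(lin_charX lin_xi) // expg_cardG // lin_char1.
by have [k ->] := prim_rootP (zeta_prim_root (cardG_gt0 G)) xiG; exists k.
Qed.

Lemma sigf_zeta_expr (gT : finGroupType) (G : {group gT}) (r : nat)
    (a : 'I_r -> gT) (sigma : 'CF(G)) (k : 'I_r -> nat) :
  sigma != 1 -> (forall i, (sigma^*)%CF (a i) = zeta #|G| ^+ k i) ->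
  sigf a sigma = -1 + (\sum_i (k i %% #|G|)%N)%:R / #|G|%:R.
Proof.
move=> sigma_neq1 sigma_k; rewrite /sigf (negbTE sigma_neq1) natr_sum mulr_suml.
by congr (_ + _); apply: eq_bigr => i _; rewrite sigma_k angle_zeta_expr ?cardG_gt0.
Qed.

Lemma sigf_conj_lin_char (gT : finGroupType) (G : {group gT}) (r : nat)
    (a : 'I_r -> gT) (tau : 'CF(G)) (d : 'I_r -> nat) :
  tau != 1 -> (forall i, tau (a i) = zeta #|G| ^+ d i) -> (forall i, (d i < #|G|)%N) ->
  sigf a (tau^*)%CF = -1 + (\sum_i d i)%:R / #|G|%:R.
Proof.
move=> tau_neq1 tau_d d_lt.
rewrite (sigf_zeta_expr (k := d)) ?cfAut_eq1 // => [|i]; last by rewrite cfConjCK.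
by congr (_ + _%:R / _); apply: eq_bigr => i _; rewrite modn_small.
Qed.

Lemma gsig_lin_char (gT : finGroupType) (G : {group gT}) (r : nat)
    (a : 'I_r -> gT) (tau : 'CF(G)) :
  tau \is a linear_char -> tau != 1 -> (forall i, a i \in G) ->
  gsig a tau = #|[pred i | tau (a i) != 1]|%:R - 2.
Proof.
move=> lin_tau tau_neq1 aG; set N := #|G|; have N_gt0 : (0 < N)%N := cardG_gt0 G.
have /all_sig2[d tau_d d_lt] := fun i => lin_char_zeta_expr lin_tau (aG i).
have supp_eq : #|[pred i | tau (a i) != 1]| = #|[pred i | (0 < d i)%N]|.
  by apply: eq_card => i; rewrite !inE tau_d zeta_expr_neq1.
have sigf_tau : sigf a tau = -1 + (\sum_i (N - d i) %% N)%:R / N%:R.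
  by apply: sigf_zeta_expr => // i; rewrite cfConjCE tau_d conjC_zeta_expr // ltnW.
have N_neq0 : N%:R != 0 :> rat by rewrite pnatr_eq0 -lt0n.
have supp_N : (\sum_i (N - d i) %% N + \sum_i d i)%:R / N%:R
              = #|[pred i | (0 < d i)%N]|%:R :> rat.
  by rewrite (sum_subn_mod d_lt) natrM mulfK.
rewrite /gsig sigf_tau (sigf_conj_lin_char tau_neq1 tau_d d_lt) supp_eq -supp_N.
by rewrite natrD mulrDl; ring.
Qed.

Lemma eq_N1_add_divr_nat (m N k : nat) : (0 < N)%N ->
  (-1 + m%:R / N%:R == k%:R :> rat) = (m == k.+1 * N)%N.
Proof.
move=> N_gt0; have N_neq0 : N%:R != 0 :> rat by rewrite pnatr_eq0 -lt0n.
rewrite addrC subr_eq natr1 -[k.+1%:R](mulfK N_neq0) (can_eq (divfK N_neq0)).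
by rewrite -natrM eqr_nat.
Qed.

Theorem proposition3p14 (gT : finGroupType) (G : {group gT}) (r : nat)
  (a : 'I_r -> gT) :
  abelian G ->
  (3 <= r)%N ->
  (forall i, a i \in G) ->
  (forall i, a i != 1%g) ->
  <<[set a i | i in 'I_r]>>%g = G ->
  (\prod_(i < r) a i)%g = 1%g ->
  (exists tau : 'CF(G), tau \is a linear_char /\
     sigf a (tau^*)%CF = 0 /\ 2 <= gsig a tau) ->
  exists tau' : 'CF(G), tau' \is a linear_char /\
     sigf a (tau'^*)%CF = 1 /\ 2 <= gsig a tau'.
Proof.
move=> _ _ aG _ _ _ [tau [lin_tau [sigf0 gsig2]]].
set N := #|G|; have N_gt0 : (0 < N)%N := cardG_gt0 G.
have tau_neq1 : tau != 1.
  by apply: contraTneq gsig2 => ->; rewrite /gsig cfConjC_cfun1 /sigf eqxx.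
have /all_sig2[d tau_d d_lt] := fun i => lin_char_zeta_expr lin_tau (aG i).
have sum_d : (\sum_i d i)%N = N.
  apply/eqP; rewrite -[N in _ == N]mul1n -(eq_N1_add_divr_nat _ 0 N_gt0).
  by rewrite -(sigf_conj_lin_char tau_neq1 tau_d d_lt) sigf0.
have supp_d : [pred i | tau (a i) != 1] =i [pred i | (0 < d i)%N].
  by move=> i; rewrite !inE tau_d zeta_expr_neq1.
have supp4 : (4 <= #|[pred i | (0 < d i)%N]|)%N.
  by move: gsig2; rewrite gsig_lin_char // (eq_card supp_d) lerBrDr -natrD ler_nat.
have [n [sum_nd supp_nd]] := exists_mulmod_sum_double d_lt sum_d (ltnW supp4).
pose tau' := tau ^+ n.
have tau'_val i : tau' (a i) = zeta N ^+ (n * d i %% N).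
  by rewrite exp_cfunE // tau_d -exprM mulnC prim_expr_mod // zeta_prim_root.
have supp_tau' : [pred i | tau' (a i) != 1] =i [pred i | tau (a i) != 1].
  by move=> i; rewrite !inE tau'_val tau_d !zeta_expr_neq1 ?ltn_pmod ?supp_nd.
have tau'_neq1 : tau' != 1.
  have /card_gt0P[i0] : (0 < #|[pred i | tau' (a i) != 1%R]|)%N.
    by rewrite (eq_card supp_tau') (eq_card supp_d) (leq_trans _ supp4).
  by rewrite inE; apply: contraNneq => ->; rewrite cfun1E aG.
exists tau'; split; first exact: rpredX.
split; last by rewrite gsig_lin_char ?rpredX // (eq_card supp_tau') -gsig_lin_char.
apply/eqP; rewrite (sigf_conj_lin_char tau'_neq1 tau'_val) => [|i]; last exact: ltn_pmod.
by rewrite -[1]/(1%:R : rat) eq_N1_add_divr_nat // sum_nd.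
Qed.
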